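(* Let $L$ be a multiplicative lattice, $n\ge1$, and $q$ a proper element of $L$. (1) If for all $a,b\in L$ with $a^nb\le q\le a\wedge b$ one has $a^n\le q$ or $a^{n-1}b\le q$, then $q$ is a strongly quasi $n$-absorbing element of $L$. (2) If for all $a_1,a_2,\dots,a_{n+1}\in L$ with $a_1a_2\cdots a_{n+1}\le q\le a_1\wedge a_2\wedge\cdots\wedge a_{n+1}$ one has $a_1\cdots a_{i-1}a_{i+1}\cdots a_{n+1}\le q$ for some $1\le i\le n+1$, then $q$ is a strongly quasi $n$-absorbing element of $L$.
   Context: A multiplicative lattice is a complete lattice $L$ with least element $0$ and compact greatest element $1$, equipped with a commutative, associative product that distributes over arbitrary joins and has $1$ as multiplicative identity. $a^0=1$. A proper element $q$ ($q<1$) is strongly quasi $n$-absorbing if whenever $a,b\in L$ (not necessarily compact) satisfy $a^nb\le q$, then $a^n\le q$ or $a^{n-1}b\le q$. *)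

From Stdlib Require Import List Arith.
Import ListNotations.

Record MultLattice := {
  car :> Type;
  le : car -> car -> Prop;
  sup : (car -> Prop) -> car;
  mul : car -> car -> car;
  zero : car;
  one : car;
  le_refl : forall x, le x x;
  le_trans : forall x y z, le x y -> le y z -> le x z;
  le_antisym : forall x y, le x y -> le y x -> x = y;
  sup_ub : forall (S : car -> Prop) x, S x -> le x (sup S);
  sup_least : forall (S : car -> Prop) y, (forall x, S x -> le x y) -> le (sup S) y;
  zero_least : forall x, le zero x;
  one_greatest : forall x, le x one;
  one_compact : forall S : car -> Prop, le one (sup S) ->
     exists l : list car, Forall S l /\ le one (sup (fun x => In x l));
  mulC : forall a b, mul a b = mul b a;
  mulA : forall a b c, mul a (mul b c) = mul (mul a b) c;
  mul1 : forall a, mul one a = a;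
  mul_sup : forall a (S : car -> Prop),
     mul a (sup S) = sup (fun y => exists s, S s /\ y = mul a s)
}.

Arguments le {L} : rename.
Arguments sup {L} : rename.
Arguments mul {L} : rename.
Arguments one {L} : rename.
Arguments zero {L} : rename.

Section Ops.
Variable L : MultLattice.

Definition meet (a b : L) : L := sup (fun x => le x a /\ le x b).

Definition meet_fam (a : nat -> L) (n : nat) : L :=
  sup (fun x => forall j, j <= n -> le x (a j)).

Fixpoint pow (a : L) (k : nat) : L :=
  match k with 0 => one | S k' => mul a (pow a k') end.

Fixpoint prodn (a : nat -> L) (k : nat) : L :=
  match k with 0 => one | S k' => mul (prodn a k') (a k') end.

Definition prod_except (a : nat -> L) (k i : nat) : L :=
  prodn (fun j => if Nat.eqb j i then one else a j) k.

Definition proper (q : L) : Prop := le q one /\ q <> one.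

Definition strongly_quasi_n_absorbing (n : nat) (q : L) : Prop :=
  proper q /\
  forall a b : L, le (mul (pow a n) b) q ->
     le (pow a n) q \/ le (mul (pow a (n - 1)) b) q.
End Ops.

Arguments meet {L}. Arguments meet_fam {L}. Arguments pow {L}.
Arguments prodn {L}. Arguments prod_except {L}. Arguments proper {L}.
Arguments strongly_quasi_n_absorbing {L}.

(** Enlarge a witness pair (a, b) of a^n b <= q to (a \/ q, b \/ q).  Since
    q <= 1, every product containing a factor q lies below q, so
    (a \/ q)^n (b \/ q) <= a^n b \/ q <= q, and both new elements lie above q.
    The hypothesis, which only concerns elements above q, applies to the
    enlarged pair, and its conclusion descends to (a, b) by monotonicity. *)

From Stdlib Require Import Arith Lia.

Section Lattice.
Variable L : MultLattice.
Implicit Types a b q x y z : L.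

Definition join a b : L := sup (fun w => w = a \/ w = b).

Lemma le_join_l a b : le a (join a b).
Proof. apply sup_ub; auto. Qed.

Lemma le_join_r a b : le b (join a b).
Proof. apply sup_ub; auto. Qed.

Lemma join_lub a b z : le a z -> le b z -> le (join a b) z.
Proof. intros Ha Hb. apply sup_least. intros x [-> | ->]; assumption. Qed.

Lemma join_eq_r y z : le y z -> join y z = z.
Proof.
  intros H. apply le_antisym.
  - apply join_lub; [exact H | apply le_refl].
  - apply le_join_r.
Qed.

Lemma mul_le_mono_l x y z : le y z -> le (mul x y) (mul x z).
Proof.
  intros H. rewrite <- (join_eq_r y z H). unfold join.
  rewrite mul_sup. apply sup_ub. exists y. auto.
Qed.

Lemma mul_le_mono_r x y z : le y z -> le (mul y x) (mul z x).
Proof. intros H. rewrite (mulC _ y), (mulC _ z). now apply mul_le_mono_l. Qed.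

Lemma mul_le_r x q : le (mul x q) q.
Proof.
  rewrite mulC. apply le_trans with (mul q one).
  - apply mul_le_mono_l, one_greatest.
  - rewrite mulC, mul1. apply le_refl.
Qed.

Lemma mul_join_le x a q : le (mul x (join a q)) (join (mul x a) q).
Proof.
  unfold join at 1. rewrite mul_sup. apply sup_least.
  intros y [s [[-> | ->] ->]].
  - apply le_join_l.
  - apply le_trans with q; [apply mul_le_r | apply le_join_r].
Qed.

Lemma pow_le_mono a b k : le a b -> le (pow a k) (pow b k).
Proof.
  intros H. induction k as [|k IH]; simpl.
  - apply le_refl.
  - apply le_trans with (mul b (pow a k)).
    + now apply mul_le_mono_r.
    + now apply mul_le_mono_l.
Qed.

Lemma pow_join_le a q k : le (pow (join a q) k) (join (pow a k) q).
Proof.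
  induction k as [|k IH]; simpl.
  - apply le_join_l.
  - apply le_trans with (mul (join a q) (join (pow a k) q)).
    { now apply mul_le_mono_l. }
    apply le_trans with (join (mul (join a q) (pow a k)) q).
    { apply mul_join_le. }
    apply join_lub; [|apply le_join_r].
    rewrite mulC. apply le_trans with (join (mul (pow a k) a) q).
    { apply mul_join_le. }
    rewrite mulC. apply le_refl.
Qed.

Lemma mul_pow_join_le n q a b :
  le (mul (pow a n) b) q -> le (mul (pow (join a q) n) (join b q)) q.
Proof.
  intros H. apply le_trans with (mul (join (pow a n) q) (join b q)).
  { apply mul_le_mono_r, pow_join_le. }
  apply le_trans with (join (mul (join (pow a n) q) b) q).
  { apply mul_join_le. }
  apply join_lub; [|apply le_refl].
  rewrite mulC. apply le_trans with (join (mul b (pow a n)) q).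
  { apply mul_join_le. }
  apply join_lub; [rewrite mulC; exact H | apply le_refl].
Qed.

Lemma prodn_const (f : nat -> L) x k :
  (forall j, j < k -> f j = x) -> prodn f k = pow x k.
Proof.
  induction k as [|k IH]; intros H; simpl; [reflexivity|].
  rewrite IH by (intros; apply H; lia). rewrite H by lia. apply mulC.
Qed.

Lemma prodn_const_except (f : nat -> L) x i k :
  i < k -> f i = one -> (forall j, j < k -> j <> i -> f j = x) ->
  prodn f k = pow x (k - 1).
Proof.
  induction k as [|k IH]; intros Hik Hi H; [lia|]. simpl.
  destruct (Nat.eq_dec i k) as [-> | Hne].
  - rewrite Hi, (prodn_const _ x) by (intros; apply H; lia).
    rewrite mulC, mul1. f_equal. lia.
  - rewrite IH, H by (auto; lia). rewrite mulC.
    destruct k as [|k]; [lia|]. simpl. rewrite Nat.sub_0_r. reflexivity.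
Qed.

(** The family a, ..., a, b of length n + 1 realizes a^n b as a product. *)
Definition pow_then (a b : L) (n : nat) : nat -> L :=
  fun j => if Nat.eqb j n then b else a.

Lemma prodn_pow_then a b n : prodn (pow_then a b n) (n + 1) = mul (pow a n) b.
Proof.
  rewrite Nat.add_1_r. simpl. unfold pow_then at 2. rewrite Nat.eqb_refl.
  f_equal. apply prodn_const. intros j Hj. unfold pow_then.
  destruct (Nat.eqb_spec j n); [lia | reflexivity].
Qed.

Lemma prod_except_pow_then_last a b n :
  prod_except (pow_then a b n) (n + 1) n = pow a n.
Proof.
  unfold prod_except. rewrite Nat.add_1_r. simpl.
  rewrite Nat.eqb_refl, mulC, mul1. apply prodn_const.
  intros j Hj. unfold pow_then. destruct (Nat.eqb_spec j n); [lia | reflexivity].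
Qed.

Lemma prod_except_pow_then_lt a b n i : i < n ->
  prod_except (pow_then a b n) (n + 1) i = mul (pow a (n - 1)) b.
Proof.
  intros Hi. unfold prod_except. rewrite Nat.add_1_r. simpl.
  destruct (Nat.eqb_spec n i) as [|_]; [lia|].
  unfold pow_then at 2. rewrite Nat.eqb_refl. f_equal.
  apply prodn_const_except with i; [exact Hi | now rewrite Nat.eqb_refl |].
  intros j Hj Hji. unfold pow_then.
  destruct (Nat.eqb_spec j i); [lia|]. destruct (Nat.eqb_spec j n); [lia | reflexivity].
Qed.

Lemma strongly_quasi_n_absorbing_above n q : proper q ->
  (forall a b, le q a -> le q b -> le (mul (pow a n) b) q ->
     le (pow a n) q \/ le (mul (pow a (n - 1)) b) q) ->
  strongly_quasi_n_absorbing n q.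
Proof.
  intros Hq Habove. split; [exact Hq|]. intros a b Hab.
  destruct (Habove (join a q) (join b q)) as [H | H].
  - apply le_join_r.
  - apply le_join_r.
  - now apply mul_pow_join_le.
  - left. apply le_trans with (pow (join a q) n); [|exact H].
    apply pow_le_mono, le_join_l.
  - right. apply le_trans with (mul (pow (join a q) (n - 1)) (join b q)); [|exact H].
    apply le_trans with (mul (pow (join a q) (n - 1)) b).
    + apply mul_le_mono_r, pow_le_mono, le_join_l.
    + apply mul_le_mono_l, le_join_l.
Qed.

End Lattice.

Theorem mainTheorem15 (L : MultLattice) (n : nat) (q : L) :
  1 <= n -> proper q ->
  ((forall a b : L, le (mul (pow a n) b) q -> le q (meet a b) ->
       le (pow a n) q \/ le (mul (pow a (n - 1)) b) q) ->
     strongly_quasi_n_absorbing n q) /\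
  ((forall a : nat -> L,
       le (prodn a (n + 1)) q -> le q (meet_fam a n) ->
       exists i, i <= n /\ le (prod_except a (n + 1) i) q) ->
     strongly_quasi_n_absorbing n q).
Proof.
  intros _ Hq. split; intros Hyp; apply strongly_quasi_n_absorbing_above;
    try exact Hq; intros a b Ha Hb Hab.
  - apply Hyp; [exact Hab|]. apply sup_ub. now split.
  - destruct (Hyp (pow_then L a b n)) as [i [Hin Hi]].
    + now rewrite prodn_pow_then.
    + apply sup_ub. intros j _. unfold pow_then. now destruct (Nat.eqb j n).
    + destruct (Nat.eq_dec i n) as [-> | Hne].
      * left. now rewrite <- (prod_except_pow_then_last L a b n).
      * right. rewrite <- (prod_except_pow_then_lt L a b n i) by lia. exact Hi.
Qed.
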